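(* Let $k$ be a field, $B$ a unital associative $k$-algebra and $(J_i)_{i\in I}$ a covering of $B$, i.e.\ a finite family of two-sided ideals with $\bigcap_{i\in I}J_i=\{0\}$. Let $B_i=B/J_i$, $B_{ij}=B/(J_i+J_j)$, $\pi_i:B\to B_i$, $\pi_{ij}:B\to B_{ij}$, $\pi^i_j:B_i\to B_{ij}$ the canonical surjections, $A=\bigoplus_{i\in I}B_i$, and let $\mathcal{C}=\bigoplus_{i,j\in I}B_{ij}$ be the $A$-coring with bimodule structure $(a_i)_i\cdot(a_{jk})_{j,k}\cdot(a'_l)_l=(\pi^j_k(a_j)a_{jk}\pi^k_j(a'_k))_{j,k}$, coproduct $\Delta_{\mathcal{C}}((\pi_{ij}(b_{ij}))_{i,j})=\sum_{k\in I}(\pi_{il}(b_{ik}))_{i,l}\otimes_A(\pi_{mj}(\delta_{kj}1_B))_{m,j}$ and counit $\varepsilon_{\mathcal{C}}((\pi_{ij}(b_{ij}))_{i,j})=(\pi_i(b_{ii}))_i$. Set $g=(\pi_{ij}(1_B))_{i,j\in I}\in\mathcal{C}$. Then: (1) If $(J_i)_{i\in I}$ is a complete covering of $B$, then $(\mathcal{C},g)$ is a Galois coring. (2) If $A$ is a faithfully flat left or right $B$-module, then $(J_i)_{i\in I}$ is a complete covering of $B$.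
   Context: $\delta_{kj}1_B$ is $1_B$ if $k=j$ and $0$ otherwise. $A$ is a $B$-bimodule via the algebra map $\iota:B\to A$, $b\mapsto(\pi_i(b))_{i\in I}$. The covering completion of $B$ is $B_c=\{(a_i)_{i\in I}\in A:\ \pi^i_j(a_i)=\pi^j_i(a_j)\text{ for all }i,j\}$; the covering is complete if $\kappa:B\to B_c$, $b\mapsto(\pi_i(b))_{i\in I}$, is surjective. For an $A$-coring $\mathcal{C}$ (an $A$-bimodule with coassociative counital $A$-bimodule maps $\Delta_{\mathcal{C}}:\mathcal{C}\to\mathcal{C}\otimes_A\mathcal{C}$, $\varepsilon_{\mathcal{C}}:\mathcal{C}\to A$), an element $g$ is grouplike if $\Delta_{\mathcal{C}}(g)=g\otimes_A g$ and $\varepsilon_{\mathcal{C}}(g)=1_A$; its coinvariants are $A^{co\mathcal{C}}_g=\{b\in A: b\cdot g=g\cdot b\}$, a subalgebra of $A$. $(\mathcal{C},g)$ with $g$ grouplike is a Galois coring if, with $B'=A^{co\mathcal{C}}_g$, the map $A\otimes_{B'}A\to\mathcal{C}$, $a\otimes_{B'}a'\mapsto a\cdot g\cdot a'$, is an isomorphism. *)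

From HB Require Import structures.
From mathcomp Require Import all_boot all_algebra.


Import GRing.Theory.
Local Open Scope ring_scope.

Section DProd.
Variables (I : finType) (R : I -> zmodType).

Definition dprod := {dffun forall i : I, R i}.
HB.instance Definition _ := Choice.on dprod.

Definition dp0 : dprod := [ffun i => 0].
Definition dpadd (f g : dprod) : dprod := [ffun i => f i + g i].
Definition dpopp (f : dprod) : dprod := [ffun i => - f i].

Lemma dpaddA : associative dpadd.
Proof. by move=> f g h; apply/ffunP=> i; rewrite !ffunE addrA. Qed.
Lemma dpaddC : commutative dpadd.
Proof. by move=> f g; apply/ffunP=> i; rewrite !ffunE addrC. Qed.
Lemma dpadd0 : left_id dp0 dpadd.
Proof. by move=> f; apply/ffunP=> i; rewrite !ffunE add0r. Qed.
Lemma dpaddN : left_inverse dp0 dpopp dpadd.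
Proof. by move=> f; apply/ffunP=> i; rewrite !ffunE addNr. Qed.

HB.instance Definition _ :=
  GRing.isZmodule.Build dprod dpaddA dpaddC dpadd0 dpaddN.
End DProd.

Definition additive_fun (M N : zmodType) (h : M -> N) : Prop :=
  forall x y, h (x + y) = h x + h y.

Definition balanced (Rs : Type) (S : Rs -> Prop) (M N X : zmodType)
    (actM : M -> Rs -> M) (actN : Rs -> N -> N) (f : M -> N -> X) : Prop :=
  [/\ forall m m' n, f (m + m') n = f m n + f m' n,
      forall m n n', f m (n + n') = f m n + f m n' &
      forall m r n, S r -> f (actM m r) n = f m (actN r n)].

Definition is_tensor_product (Rs : Type) (S : Rs -> Prop) (M N T : zmodType)
    (actM : M -> Rs -> M) (actN : Rs -> N -> N) (t : M -> N -> T) : Prop :=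
  balanced Rs S M N T actM actN t /\
  forall (X : zmodType) (f : M -> N -> X), balanced Rs S M N X actM actN f ->
    exists h : T -> X,
      [/\ additive_fun T X h, (forall m n, h (t m n) = f m n) &
          forall h' : T -> X, additive_fun T X h' ->
            (forall m n, h' (t m n) = f m n) -> forall x, h' x = h x].

Definition rmodule (Rg : pzRingType) (M : zmodType) (act : M -> Rg -> M) :=
  [/\ forall m, act m 1 = m,
      forall m a b, act (act m a) b = act m (a * b),
      forall m m' a, act (m + m') a = act m a + act m' a &
      forall m a b, act m (a + b) = act m a + act m b].

Definition lmodule (Rg : pzRingType) (M : zmodType) (act : Rg -> M -> M) :=
  [/\ forall m, act 1 m = m,
      forall m a b, act a (act b m) = act (a * b) m,
      forall m m' a, act a (m + m') = act a m + act a m' &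
      forall m a b, act (a + b) m = act a m + act b m].

Definition rlinear (Rg : pzRingType) (M M' : zmodType)
    (act : M -> Rg -> M) (act' : M' -> Rg -> M') (f : M -> M') :=
  additive_fun M M' f /\ forall m a, f (act m a) = act' (f m) a.

Definition llinear (Rg : pzRingType) (M M' : zmodType)
    (act : Rg -> M -> M) (act' : Rg -> M' -> M') (f : M -> M') :=
  additive_fun M M' f /\ forall m a, f (act a m) = act' a (f m).

Definition exact_at (M1 M2 M3 : zmodType) (f : M1 -> M2) (g : M2 -> M3) :=
  forall y, g y = 0 <-> exists x, f x = y.

Definition faithfully_flat_left (Rg : pzRingType) (N : zmodType)
    (actN : Rg -> N -> N) : Prop :=
  lmodule Rg N actN /\
  forall (M1 M2 M3 : zmodType) (a1 : M1 -> Rg -> M1) (a2 : M2 -> Rg -> M2)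
         (a3 : M3 -> Rg -> M3) (f : M1 -> M2) (g : M2 -> M3),
    rmodule Rg M1 a1 -> rmodule Rg M2 a2 -> rmodule Rg M3 a3 ->
    rlinear Rg M1 M2 a1 a2 f -> rlinear Rg M2 M3 a2 a3 g ->
  forall (T1 T2 T3 : zmodType) (t1 : M1 -> N -> T1) (t2 : M2 -> N -> T2)
         (t3 : M3 -> N -> T3),
    is_tensor_product Rg (fun _ : Rg => True) M1 N T1 a1 actN t1 ->
    is_tensor_product Rg (fun _ : Rg => True) M2 N T2 a2 actN t2 ->
    is_tensor_product Rg (fun _ : Rg => True) M3 N T3 a3 actN t3 ->
  forall (F : T1 -> T2) (G : T2 -> T3), additive_fun T1 T2 F -> additive_fun T2 T3 G ->
    (forall m n, F (t1 m n) = t2 (f m) n) ->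
    (forall m n, G (t2 m n) = t3 (g m) n) ->
    (exact_at M1 M2 M3 f g <-> exact_at T1 T2 T3 F G).

Definition faithfully_flat_right (Rg : pzRingType) (N : zmodType)
    (actN : N -> Rg -> N) : Prop :=
  rmodule Rg N actN /\
  forall (M1 M2 M3 : zmodType) (a1 : Rg -> M1 -> M1) (a2 : Rg -> M2 -> M2)
         (a3 : Rg -> M3 -> M3) (f : M1 -> M2) (g : M2 -> M3),
    lmodule Rg M1 a1 -> lmodule Rg M2 a2 -> lmodule Rg M3 a3 ->
    llinear Rg M1 M2 a1 a2 f -> llinear Rg M2 M3 a2 a3 g ->
  forall (T1 T2 T3 : zmodType) (t1 : N -> M1 -> T1) (t2 : N -> M2 -> T2)
         (t3 : N -> M3 -> T3),
    is_tensor_product Rg (fun _ : Rg => True) N M1 T1 actN a1 t1 ->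
    is_tensor_product Rg (fun _ : Rg => True) N M2 T2 actN a2 t2 ->
    is_tensor_product Rg (fun _ : Rg => True) N M3 T3 actN a3 t3 ->
  forall (F : T1 -> T2) (G : T2 -> T3), additive_fun T1 T2 F -> additive_fun T2 T3 G ->
    (forall n m, F (t1 n m) = t2 n (f m)) ->
    (forall n m, G (t2 n m) = t3 n (g m)) ->
    (exact_at M1 M2 M3 f g <-> exact_at T1 T2 T3 F G).

(* A unital associative k-algebra (possibly zero) is given as a ring B      *)
(* together with a ring morphism k -> B landing in the centre of B.        *)
Definition central_structure_map (k B : pzRingType) (alg : k -> B) : Prop :=
  forall (c : k) (b : B), alg c * b = b * alg c.

(* Two-sided ideals (of the ring B; for a k-algebra these are automatically *)
(* k-subspaces, since c.x = alg c * x).                                    *)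
Definition two_sided_ideal (B : pzRingType) (J : B -> Prop) :=
  [/\ J 0,
      forall x y, J x -> J y -> J (x + y),
      forall x, J x -> J (- x) &
      forall a x b, J x -> J (a * x * b)].

(* The covering data: B_i = B/J_i (Bq i, projection p i), B_ij = B/(J_i+J_j) *)
(* (Bqq i j, projection pij i j), pi^i_j : B_i -> B_ij is pl i j and         *)
(* pi^j_i : B_j -> B_ij (= B_ji) is pr i j.                                  *)
Section Covering.
Variables (B : pzRingType) (I : finType).
Variables (Bq : I -> pzRingType) (Bqq : I -> I -> pzRingType).
Variables (p : forall i, B -> Bq i) (pij : forall i j, B -> Bqq i j).
Variables (pl : forall i j, Bq i -> Bqq i j) (pr : forall i j, Bq j -> Bqq i j).

Definition Aty := dprod I (fun i => Bq i).
Definition Cty := dprod (I * I)%type (fun ij : I * I => Bqq ij.1 ij.2).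

Definition mulA (a a' : Aty) : Aty := @finfun _ (fun i => Bq i) (fun i => a i * a' i).
Definition oneA : Aty := @finfun _ (fun i => Bq i) (fun i => 1).

Definition lactBA (b : B) (a : Aty) : Aty := @finfun _ (fun i => Bq i) (fun i => p i b * a i).
Definition ractAB (a : Aty) (b : B) : Aty := @finfun _ (fun i => Bq i) (fun i => a i * p i b).

Definition lactC (a : Aty) (c : Cty) : Cty :=
  @finfun _ (fun ij : I * I => Bqq ij.1 ij.2)
    (fun ij : I * I => pl ij.1 ij.2 (a ij.1) * c ij).
Definition ractC (c : Cty) (a : Aty) : Cty :=
  @finfun _ (fun ij : I * I => Bqq ij.1 ij.2)
    (fun ij : I * I => c ij * pr ij.1 ij.2 (a ij.2)).

Definition gC : Cty := @finfun _ (fun ij : I * I => Bqq ij.1 ij.2)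
    (fun ij : I * I => pij ij.1 ij.2 1).

Definition counit_is (c : Cty) (a : Aty) : Prop :=
  forall b : I -> I -> B, (forall i j, pij i j (b i j) = c (i, j)) ->
    forall i, a i = p i (b i i).

Definition coprod_is (T : zmodType) (t : Cty -> Cty -> T) (c : Cty) (x : T)
  : Prop :=
  forall b : I -> I -> B, (forall i j, pij i j (b i j) = c (i, j)) ->
    x = \sum_(kk : I)
          t (@finfun _ (fun ij : I * I => Bqq ij.1 ij.2)
               (fun il : I * I => pij il.1 il.2 (b il.1 kk)))
            (@finfun _ (fun ij : I * I => Bqq ij.1 ij.2)
               (fun mj : I * I => pij mj.1 mj.2 (if kk == mj.2 then 1 else 0))).

Definition grouplike (g : Cty) : Prop :=
  counit_is g oneA /\
  forall (T : zmodType) (t : Cty -> Cty -> T),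
    is_tensor_product Aty (fun _ : Aty => True) Cty Cty T ractC lactC t ->
    coprod_is T t g (t g g).

Definition coinv (g : Cty) (a : Aty) : Prop := lactC a g = ractC g a.

(* (C, g) is a Galois coring: g grouplike and                              *)
(* A (x)_{B'} A -> C, a (x) a' |-> a.g.a' is an isomorphism, i.e. (C, that  *)
(* balanced map) is a tensor product A (x)_{B'} A, with B' = coinv g.      *)
Definition galois_coring (g : Cty) : Prop :=
  grouplike g /\
  is_tensor_product Aty (coinv g) Aty Aty Cty mulA mulA
    (fun a a' => lactC a (ractC g a')).

Definition in_completion (a : Aty) : Prop :=
  forall i j, pl i j (a i) = pr i j (a j).

Definition complete_covering : Prop :=
  forall a : Aty, in_completion a -> exists b : B, forall i, p i b = a i.

End Covering.

(* Tensor products over B commute with finite direct sums, and B/I (x)_B B/J = B/(I + J).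
   Hence A (x)_B A = (+)_{i,j} B/(J_i + J_j) = C via a (x) a' |-> a.g.a'; since the
   coinvariants of g contain the image of B, the tensor product over them is C as well,
   so (1) holds even without completeness.
   For (2), the sequence B -> A -> C, b |-> (pi_i b)_i, a |-> (pi^i_j a_i - pi^j_i a_j)_{i,j}
   is exact at A exactly when the covering is complete.  Tensored with A (on the side
   where A is faithfully flat) it becomes
   A -> C -> (+)_{i,j,k} B/(J_i + J_j + J_k), which is exact by a direct computation;
   faithful flatness then gives exactness of the original sequence. *)

From HB Require Import structures.
From mathcomp Require Import all_boot all_algebra.
From mathcomp Require Import boolp.
Import GRing.Theory.
Local Open Scope ring_scope.
Local Open Scope quotient_scope.

Set Implicit Arguments.
Unset Strict Implicit.
Unset Printing Implicit Defensive.

Section AdditiveFun.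
Variables (M N : zmodType) (h : M -> N).
Hypothesis h_add : additive_fun M N h.

Lemma additive_fun0 : h 0 = 0.
Proof. by apply: (addrI (h 0)); rewrite -h_add !addr0. Qed.

Lemma additive_funN x : h (- x) = - h x.
Proof. by apply: (addrI (h x)); rewrite -h_add !subrr additive_fun0. Qed.

Lemma additive_funB x y : h (x - y) = h x - h y.
Proof. by rewrite h_add additive_funN. Qed.

Lemma additive_fun_sum (T : Type) (r : seq T) (P : pred T) (F : T -> M) :
  h (\sum_(j <- r | P j) F j) = \sum_(j <- r | P j) h (F j).
Proof. exact: (big_morph h h_add additive_fun0). Qed.
End AdditiveFun.

Section Preimage.
Variables (T : choiceType) (S : eqType) (f : T -> S).
Hypothesis f_surj : forall y, exists x, f x = y.

Definition preimage (y : S) : T :=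
  xchoose (let: ex_intro x fx := f_surj y in ex_intro _ x (introT eqP fx)).

Lemma preimageK y : f (preimage y) = y.
Proof. exact/eqP/(xchooseP (P := fun x => f x == y)). Qed.
End Preimage.

Section DirectProduct.
Variables (X : finType) (M : X -> zmodType).

Lemma dprod_addE (m m' : dprod X M) x : (m + m') x = m x + m' x.
Proof. exact: ffunE. Qed.

Lemma dprod0E x : (0 : dprod X M) x = 0.
Proof. exact: ffunE. Qed.

Lemma dprod_sumE (T : Type) (r : seq T) (P : pred T) (F : T -> dprod X M) x :
  (\sum_(j <- r | P j) F j) x = \sum_(j <- r | P j) F j x.
Proof. by elim/big_rec2: _ => [|j m s _ <-]; rewrite ?dprod0E ?dprod_addE. Qed.

Definition dprod_single x (m : M x) : dprod X M :=
  @finfun X M (dfwith (fun z => 0 : M z) m).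

Lemma dprod_singleE x (m : M x) y :
  dprod_single m y = dfwith (fun z => 0 : M z) m y.
Proof. exact: ffunE. Qed.

Lemma dprod_single_add x : additive_fun (M x) (dprod X M) (@dprod_single x).
Proof.
move=> m m'; apply/ffunP=> y; rewrite [in RHS]ffunE !dprod_singleE.
by case: dfwithP => [|z xz]; rewrite ?dfwith_in ?dfwith_out ?addr0.
Qed.

Lemma dprod_sum_single (m : dprod X M) : m = \sum_x dprod_single (m x).
Proof.
apply/ffunP=> y; rewrite dprod_sumE (bigD1 y) //= dprod_singleE dfwith_in.
by rewrite big1 ?addr0 // => x yx; rewrite dprod_singleE dfwith_out // eq_sym.
Qed.
End DirectProduct.

Definition dprod_ract (R : Type) (X : finType) (M : X -> zmodType)
    (act : forall x, M x -> R -> M x) (m : dprod X M) (r : R) : dprod X M :=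
  @finfun X M (fun x => act x (m x) r).

Definition dprod_lact (R : Type) (Y : finType) (N : Y -> zmodType)
    (act : forall y, R -> N y -> N y) (r : R) (n : dprod Y N) : dprod Y N :=
  @finfun Y N (fun y => act y r (n y)).

Section Modules.
Variable R : pzRingType.

Lemma rmodule_regular : rmodule R R (fun m r => m * r).
Proof. by split=> *; rewrite ?mulr1 ?mulrA ?mulrDl ?mulrDr. Qed.

Lemma lmodule_regular : lmodule R R (fun r m => r * m).
Proof. by split=> *; rewrite ?mul1r ?mulrA ?mulrDl ?mulrDr. Qed.

Lemma rmodule_rmorph (S : pzRingType) (q : {rmorphism R -> S}) :
  rmodule R S (fun s r => s * q r).
Proof. by split=> *; rewrite ?rmorph1 ?mulr1 ?rmorphM ?mulrA ?rmorphD ?mulrDl ?mulrDr. Qed.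

Lemma lmodule_rmorph (S : pzRingType) (q : {rmorphism R -> S}) :
  lmodule R S (fun r s => q r * s).
Proof. by split=> *; rewrite ?rmorph1 ?mul1r ?rmorphM ?mulrA ?rmorphD ?mulrDl ?mulrDr. Qed.

Lemma rmodule_dprod (X : finType) (M : X -> zmodType) (act : forall x, M x -> R -> M x) :
  (forall x, rmodule R (M x) (act x)) -> rmodule R (dprod X M) (dprod_ract act).
Proof.
move=> actP; split=> *; apply/ffunP=> x; rewrite !ffunE;
  by case: (actP x) => act1 actM actDl actDr; rewrite ?act1 ?actM ?actDl ?actDr.
Qed.

Lemma lmodule_dprod (Y : finType) (N : Y -> zmodType) (act : forall y, R -> N y -> N y) :
  (forall y, lmodule R (N y) (act y)) -> lmodule R (dprod Y N) (dprod_lact act).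
Proof.
move=> actP; split=> *; apply/ffunP=> y; rewrite !ffunE;
  by case: (actP y) => act1 actM actDl actDr; rewrite ?act1 ?actM ?actDl ?actDr.
Qed.
End Modules.

Lemma is_tensor_product_transfer (R R' : Type) (S : R -> Prop) (S' : R' -> Prop)
    (M N T : zmodType) (actM : M -> R -> M) (actN : R -> N -> N)
    (actM' : M -> R' -> M) (actN' : R' -> N -> N) (t t' : M -> N -> T) :
    is_tensor_product R S M N T actM actN t -> (forall m n, t' m n = t m n) ->
    balanced R' S' M N T actM' actN' t' ->
    (forall r, S r -> exists2 r', S' r' &
       (forall m, actM m r = actM' m r') /\ (forall n, actN r n = actN' r' n)) ->
  is_tensor_product R' S' M N T actM' actN' t'.
Proof.
move=> [_ t_univ] t'E t'bal S_S'; split=> // X f [fD1 fD2 fbal'].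
have fbal : balanced R S M N X actM actN f.
  by split=> // m r n /S_S'[r' S'r' [-> ->]]; apply: fbal'.
have [h [hD hE h_uniq]] := t_univ X f fbal.
exists h; split=> // [m n | h' h'D h'E]; first by rewrite t'E.
by apply: h_uniq => // m n; rewrite -t'E.
Qed.

Section RegularTensor.
Variable R : pzRingType.

Lemma is_tensor_product_regular_r (M : zmodType) (act : M -> R -> M) :
  rmodule R M act -> is_tensor_product R (fun _ => True) M R M act (fun r s => r * s) act.
Proof.
case=> act1 actM actDl actDr; split=> [|X f [fD1 fD2 fbal]]; first by split.
exists (f^~ 1); split=> [m m' | m r | h' _ h'E m]; first exact: fD1.
  by rewrite fbal // mulr1.
by rewrite -[m in LHS]act1 h'E.
Qed.

Lemma is_tensor_product_regular_l (N : zmodType) (act : R -> N -> N) :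
  lmodule R N act -> is_tensor_product R (fun _ => True) R N N (fun r s => r * s) act act.
Proof.
case=> act1 actM actDl actDr; split=> [|X f [fD1 fD2 fbal]].
  by split=> // *; rewrite actM.
exists (f 1); split=> [n n' | r n | h' _ h'E n]; first exact: fD2.
  by rewrite -fbal // mul1r.
by rewrite -[n in LHS]act1 h'E.
Qed.

Lemma tensor_regular_map_l (M N T : zmodType) (actM : M -> R -> M) (actN : R -> N -> N)
    (f : R -> M) (t : M -> N -> T) :
    rlinear R R M (fun r s => r * s) actM f ->
    balanced R (fun _ => True) M N T actM actN t ->
  forall r n, t (f 1) (actN r n) = t (f r) n.
Proof. by case=> _ fM [_ _ tbal] r n; rewrite -tbal // -fM mul1r. Qed.

Lemma tensor_regular_map_r (M N T : zmodType) (actM : R -> M -> M) (actN : N -> R -> N)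
    (f : R -> M) (t : N -> M -> T) :
    llinear R R M (fun r s => r * s) actM f ->
    balanced R (fun _ => True) N M T actN actM t ->
  forall n r, t (actN n r) (f 1) = t n (f r).
Proof. by case=> _ fM [_ _ tbal] n r; rewrite tbal // -fM mulr1. Qed.
End RegularTensor.

Section DirectSumTensor.
Variables (R : Type) (S : R -> Prop) (X Y : finType).
Variables (M : X -> zmodType) (N : Y -> zmodType) (T : X -> Y -> zmodType).
Variables (actM : forall x, M x -> R -> M x) (actN : forall y, R -> N y -> N y).
Variable t : forall x y, M x -> N y -> T x y.
Hypotheses (actM0 : forall x r, actM (0 : M x) r = 0) (actN0 : forall y r, actN r (0 : N y) = 0).
Hypothesis t_tensor :
  forall x y, is_tensor_product R S (M x) (N y) (T x y) (@actM x) (@actN y) (@t x y).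

Local Notation TXY := (fun xy : X * Y => T xy.1 xy.2).

Definition dprod_tensor (m : dprod X M) (n : dprod Y N) : dprod (X * Y)%type TXY :=
  @finfun _ TXY (fun xy => t (m xy.1) (n xy.2)).

Let tensor0l x y (n : N y) : t (0 : M x) n = 0.
Proof. by case: (t_tensor x y) => -[tD _ _] _; apply: (additive_fun0 (fun m m' => tD m m' n)). Qed.

Let tensor0r x y (m : M x) : t m (0 : N y) = 0.
Proof. by case: (t_tensor x y) => -[_ tD _] _; apply: (additive_fun0 (tD m)). Qed.

Lemma dprod_ract_single x (m : M x) r :
  dprod_ract actM (dprod_single m) r = dprod_single (actM m r).
Proof.
apply/ffunP=> z; rewrite ffunE !dprod_singleE.
by case: dfwithP => [|z' xz]; rewrite ?dfwith_in ?dfwith_out.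
Qed.

Lemma dprod_lact_single y r (n : N y) :
  dprod_lact actN r (dprod_single n) = dprod_single (actN r n).
Proof.
apply/ffunP=> z; rewrite ffunE !dprod_singleE.
by case: dfwithP => [|z' yz]; rewrite ?dfwith_in ?dfwith_out.
Qed.

Lemma dprod_tensor_single x y (m : M x) (n : N y) :
  dprod_tensor (dprod_single m) (dprod_single n) = dprod_single (t m n : TXY (x, y)).
Proof.
apply/ffunP=> -[x' y']; rewrite ffunE !dprod_singleE /=.
case: dfwithP => [|x'' xx'']; last by rewrite tensor0l dfwith_out // xpair_eqE (negbTE xx'').
case: dfwithP => [|y'' yy'']; first by rewrite dfwith_in.
by rewrite tensor0r dfwith_out // xpair_eqE eqxx (negbTE yy'').
Qed.

Lemma is_tensor_product_dprod :
  is_tensor_product R S (dprod X M) (dprod Y N) (dprod (X * Y)%type TXY)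
    (dprod_ract actM) (dprod_lact actN) dprod_tensor.
Proof.
split.
  split=> [m m' n | m n n' | m r n Sr]; apply/ffunP=> -[x y]; rewrite !ffunE /=;
    case: (t_tensor x y) => -[tD1 tD2 tbal] _.
  - by rewrite tD1.
  - by rewrite tD2.
  - exact: tbal.
move=> Z f [fD1 fD2 fbal].
have fxy_bal x y : balanced R S (M x) (N y) Z (@actM x) (@actN y)
    (fun m n => f (dprod_single m) (dprod_single n)).
  split=> [m m' n | m n n' | m r n Sr].
  - by rewrite (dprod_single_add m m') fD1.
  - by rewrite (dprod_single_add n n') fD2.
  - by rewrite -dprod_ract_single fbal // dprod_lact_single.
pose h x y := projT1 (cid ((t_tensor x y).2 Z _ (fxy_bal x y))).
have h_spec x y := projT2 (cid ((t_tensor x y).2 Z _ (fxy_bal x y))).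
exists (fun z : dprod (X * Y)%type TXY => \sum_xy h xy.1 xy.2 (z xy)); split.
- move=> z z'; rewrite -big_split; apply: eq_bigr => -[x y] _.
  by case: (h_spec x y) => hD _ _; rewrite ffunE; apply: hD.
- move=> m n.
  have -> : f m n = \sum_x \sum_y f (dprod_single (m x)) (dprod_single (n y)).
    rewrite {1}[m]dprod_sum_single (additive_fun_sum (fun m m' => fD1 m m' _)).
    by apply: eq_bigr => x _; rewrite {1}[n]dprod_sum_single (additive_fun_sum (fD2 _)).
  rewrite pair_bigA; apply: eq_bigr => -[x y] _.
  by case: (h_spec x y) => _ hE _; rewrite ffunE; apply: hE.
- move=> h' h'D h'E z; rewrite [z in LHS]dprod_sum_single (additive_fun_sum h'D).
  apply: eq_bigr => -[x y] _; case: (h_spec x y) => _ _ h_uniq.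
  apply: (h_uniq (fun w => h' (dprod_single (w : TXY (x, y)))) _ _ (z (x, y))).
    by move=> w w'; rewrite (dprod_single_add (M := TXY) (x := (x, y))) h'D.
  by move=> m n; rewrite -dprod_tensor_single h'E.
Qed.
End DirectSumTensor.

Definition in_kernel_sum (B S1 S2 : pzRingType) (q1 : {rmorphism B -> S1})
    (q2 : {rmorphism B -> S2}) (u : B) : Prop :=
  exists x y, [/\ q1 x = 0, q2 y = 0 & u = x + y].

Section CyclicTensor.
Variables (B S1 S2 : pzRingType) (T : zmodType).
Variables (q1 : {rmorphism B -> S1}) (q2 : {rmorphism B -> S2}) (q : B -> T).
Hypotheses (q1_surj : forall y, exists b, q1 b = y) (q2_surj : forall y, exists b, q2 b = y).
Hypotheses (q_surj : forall z, exists b, q b = z) (q_add : additive_fun B T q).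
Hypothesis q_ker : forall u, q u = 0 -> in_kernel_sum q1 q2 u.
Variable t : S1 -> S2 -> T.
Hypothesis tE : forall b c, t (q1 b) (q2 c) = q (b * c).

Lemma cyclic_tensor :
  is_tensor_product B (fun _ => True) S1 S2 T
    (fun s r => s * q1 r) (fun r s => q2 r * s) t.
Proof.
split.
  split=> [m m' n | m n n' | m r n _].
  - have [[b <-] [b' <-]] := (q1_surj m, q1_surj m'); have [c <-] := q2_surj n.
    by rewrite -rmorphD !tE mulrDl q_add.
  - have [[c <-] [c' <-]] := (q2_surj n, q2_surj n'); have [b <-] := q1_surj m.
    by rewrite -rmorphD !tE mulrDr q_add.
  - have [[b <-] [c <-]] := (q1_surj m, q2_surj n).
    by rewrite -!rmorphM !tE mulrA.
move=> X f [fD1 fD2 fbal].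
pose g u := f (q1 u) 1.
have gD : additive_fun B X g by move=> u v; rewrite /g rmorphD fD1.
have fE b c : f (q1 b) (q2 c) = g (b * c) by rewrite /g rmorphM fbal // mulr1.
have g_q u v : q u = q v -> g u = g v.
  move=> quv; apply/eqP; rewrite -subr_eq0 -(additive_funB gD).
  have /q_ker[x [y [q1x q2y ->]]] : q (u - v) = 0 by rewrite (additive_funB q_add) quv subrr.
  rewrite gD {1}/g q1x (additive_fun0 (fun m m' => fD1 m m' 1)) add0r.
  by rewrite -[y]mul1r -fE q2y (additive_fun0 (fD2 _)).
exists (fun z => g (preimage q_surj z)); split.
- by move=> z z'; rewrite -gD; apply: g_q; rewrite q_add !preimageK.
- move=> m n; have [[b <-] [c <-]] := (q1_surj m, q2_surj n).
  by rewrite fE tE; apply: g_q; rewrite preimageK.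
- move=> h' _ h'E z; rewrite -[in LHS](preimageK q_surj z).
  by rewrite -[preimage _ _]mulr1 -tE h'E fE.
Qed.
End CyclicTensor.

Section KernelSumQuotient.
Variables (B S1 S2 : pzRingType) (q1 : {rmorphism B -> S1}) (q2 : {rmorphism B -> S2}).

Definition kernel_sum : {pred B} := fun u => `[< in_kernel_sum q1 q2 u >].

Lemma kernel_sum_closed : zmod_closed kernel_sum.
Proof.
split=> [|u v /asboolP[x [y [qx qy ->]]] /asboolP[x' [y' [qx' qy' ->]]]];
  apply/asboolP.
  by exists 0, 0; rewrite !rmorph0 addr0.
exists (x - x'), (y - y'); rewrite !rmorphB qx qy qx' qy' !subrr.
by split=> //; rewrite opprD addrACA.
Qed.

HB.instance Definition _ := GRing.isZmodClosed.Build B kernel_sum kernel_sum_closed.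

Definition kernel_sum_quot := @Quotient.quot B kernel_sum.

Lemma kernel_sum_pi_add : additive_fun B kernel_sum_quot \pi.
Proof. exact: pi_addr. Qed.

Lemma kernel_sum_pi_eq u v :
  \pi_kernel_sum_quot u = \pi_kernel_sum_quot v <-> in_kernel_sum q1 q2 (u - v).
Proof.
have e : (u - v \in kernel_sum) = (\pi_kernel_sum_quot u == \pi_kernel_sum_quot v).
  exact: Quotient.idealrBE.
split=> [/eqP | uv]; first by rewrite -e => /asboolP.
by apply/eqP; rewrite -e; apply/asboolP.
Qed.

Lemma kernel_sum_pi_eq0 u : \pi_kernel_sum_quot u = 0 <-> in_kernel_sum q1 q2 u.
Proof. by rewrite -(additive_fun0 kernel_sum_pi_add) kernel_sum_pi_eq subr0. Qed.

Hypotheses (q1_surj : forall y, exists b, q1 b = y) (q2_surj : forall y, exists b, q2 b = y).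

Definition kernel_sum_tensor (s1 : S1) (s2 : S2) : kernel_sum_quot :=
  \pi_kernel_sum_quot (preimage q1_surj s1 * preimage q2_surj s2).

Lemma kernel_sum_tensorE b c : kernel_sum_tensor (q1 b) (q2 c) = \pi_kernel_sum_quot (b * c).
Proof.
apply/kernel_sum_pi_eq.
set b' := preimage q1_surj (q1 b); set c' := preimage q2_surj (q2 c).
exists ((b' - b) * c'), (b * (c' - c)); split.
- by rewrite rmorphM rmorphB preimageK subrr mul0r.
- by rewrite rmorphM rmorphB preimageK subrr mulr0.
- by rewrite mulrBl mulrBr addrA subrK.
Qed.

Lemma is_tensor_product_kernel_sum :
  is_tensor_product B (fun _ => True) S1 S2 kernel_sum_quot
    (fun s r => s * q1 r) (fun r s => q2 r * s) kernel_sum_tensor.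
Proof.
apply: cyclic_tensor => //.
- by move=> z; exists (repr z); apply: reprK.
- exact: kernel_sum_pi_add.
- by move=> u /kernel_sum_pi_eq0.
- exact: kernel_sum_tensorE.
Qed.

Definition kernel_sum_factor (S3 : pzRingType) (q3 : {rmorphism B -> S3})
    (q3_surj : forall y, exists b, q3 b = y) (s : S3) : kernel_sum_quot :=
  \pi_kernel_sum_quot (preimage q3_surj s).

Section Factor.
Variables (S3 : pzRingType) (q3 : {rmorphism B -> S3}).
Hypothesis q3_surj : forall y, exists b, q3 b = y.
Hypothesis q3_ker : forall u, q3 u = 0 -> in_kernel_sum q1 q2 u.

Lemma kernel_sum_factorE b : kernel_sum_factor q3_surj (q3 b) = \pi_kernel_sum_quot b.
Proof. by apply/kernel_sum_pi_eq/q3_ker; rewrite rmorphB preimageK subrr. Qed.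

Lemma kernel_sum_factor_add :
  additive_fun S3 kernel_sum_quot (kernel_sum_factor q3_surj).
Proof.
move=> s s'; have [[b <-] [b' <-]] := (q3_surj s, q3_surj s').
by rewrite -rmorphD !kernel_sum_factorE kernel_sum_pi_add.
Qed.
End Factor.
End KernelSumQuotient.

Section Covering.
Variables (B : pzRingType) (I : finType) (J : I -> B -> Prop).
Variables (Bq : I -> pzRingType) (p : forall i, {rmorphism B -> Bq i}).
Hypothesis p_surj : forall i (y : Bq i), exists b : B, p i b = y.
Hypothesis p_ker : forall i (b : B), p i b = 0 <-> J i b.
Variables (Bqq : I -> I -> pzRingType) (pij : forall i j, {rmorphism B -> Bqq i j}).
Hypothesis pij_surj : forall i j (y : Bqq i j), exists b : B, pij i j b = y.
Hypothesis pij_ker : forall i j (b : B),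
  pij i j b = 0 <-> exists x y, [/\ J i x, J j y & b = x + y].
Variables (pl : forall i j, {rmorphism Bq i -> Bqq i j}).
Variables (pr : forall i j, {rmorphism Bq j -> Bqq i j}).
Hypothesis pl_comp : forall i j (b : B), pl i j (p i b) = pij i j b.
Hypothesis pr_comp : forall i j (b : B), pr i j (p j b) = pij i j b.

Local Notation A := (Aty I Bq).
Local Notation C := (Cty I Bqq).
Local Notation ract := (ractAB B I Bq (fun i b => p i b)).
Local Notation lact := (lactBA B I Bq (fun i b => p i b)).
Local Notation g := (gC B I Bqq (fun i j b => pij i j b)).
Local Notation lC := (lactC I Bq Bqq (fun i j x => pl i j x)).
Local Notation rC := (ractC I Bq Bqq (fun i j x => pr i j x)).
Local Notation coinv_g := (coinv I Bq Bqq (fun i j x => pl i j x) (fun i j x => pr i j x) g).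
Local Notation complete :=
  (complete_covering B I Bq Bqq (fun i b => p i b) (fun i j x => pl i j x) (fun i j x => pr i j x)).

Lemma pij_eq0 i j b : pij i j b = 0 <-> in_kernel_sum (p i) (p j) b.
Proof.
by rewrite pij_ker; split=> -[x [y [x0 y0 ->]]]; exists x, y; split=> //; apply/p_ker.
Qed.

Lemma pij_l0 i j b : p i b = 0 -> pij i j b = 0.
Proof. by rewrite -pl_comp => ->; rewrite rmorph0. Qed.

Lemma pij_r0 i j b : p j b = 0 -> pij i j b = 0.
Proof. by rewrite -pr_comp => ->; rewrite rmorph0. Qed.

Definition iotaA (b : B) : A := @finfun I (fun i => Bq i) (fun i => p i b).

Definition tensorAA : A -> A -> C :=
  dprod_tensor (fun i j (y : Bq i) (z : Bq j) => pl i j y * pr i j z).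

Lemma tensorAA_is_tensor_product :
  is_tensor_product B (fun _ => True) A A C ract lact tensorAA.
Proof.
apply: (is_tensor_product_dprod (actM := fun i y r => y * p i r)
  (actN := fun j r z => p j r * z)) => [i r | j r | i j]; rewrite ?mul0r ?mulr0 //.
apply: (cyclic_tensor (q := pij i j)) => // [| | u /pij_eq0 // | b c].
- exact: pij_surj.
- exact: rmorphD.
- by rewrite pl_comp pr_comp rmorphM.
Qed.

Lemma coinv_iotaA b : coinv_g (iotaA b).
Proof. by apply/ffunP=> -[i j]; rewrite !ffunE /= pl_comp pr_comp rmorph1 mulr1 mul1r. Qed.

Lemma galois_is_tensor_product :
  is_tensor_product A coinv_g A A C (mulA I Bq) (mulA I Bq) (fun a a' => lC a (rC g a')).
Proof.
apply: (is_tensor_product_transfer tensorAA_is_tensor_product).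
- by move=> a a'; apply/ffunP=> -[i j]; rewrite !ffunE /= rmorph1 mul1r.
- split=> [a a' a'' | a a' a'' | a r a' r_coinv]; apply/ffunP=> -[i j]; rewrite !ffunE /=.
  + by rewrite rmorphD mulrDl.
  + by rewrite rmorphD !mulrDr.
  + have := congr1 (fun c : C => c (i, j)) r_coinv; rewrite !ffunE /= => r_ij.
    by rewrite rmorph1 mulr1 mul1r in r_ij; rewrite rmorph1 !mul1r !rmorphM -mulrA r_ij.
- move=> r _; exists (iotaA r); first exact: coinv_iotaA.
  by split=> a; apply/ffunP=> i; rewrite !ffunE.
Qed.

Lemma counit_g : counit_is B I Bq Bqq (fun i b => p i b) (fun i j b => pij i j b) g (oneA I Bq).
Proof.
move=> b bg i; rewrite ffunE; apply/eqP; rewrite -subr_eq0 -(rmorph1 (p i)) -rmorphB.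
have /pij_eq0[x [y [x0 y0 ->]]] : pij i i (1 - b i i) = 0.
  by rewrite rmorphB bg ffunE /= subrr.
by rewrite rmorphD x0 y0 addr0.
Qed.

Definition idemA (i : I) : A := @finfun I (fun j => Bq j) (fun j => (i == j)%:R).

Lemma sum_lactC_idemA (c : C) : c = \sum_i lC (idemA i) c.
Proof.
apply/ffunP=> -[i l]; rewrite dprod_sumE (bigD1 i) //= !ffunE /= eqxx rmorph1 mul1r.
by rewrite big1 ?addr0 // => i' /negbTE i'i; rewrite !ffunE /= i'i rmorph0 mul0r.
Qed.

Lemma coproduct_g (T : zmodType) (t : C -> C -> T) :
    is_tensor_product A (fun _ => True) C C T rC lC t ->
  coprod_is B I Bqq (fun i j b => pij i j b) T t g (t g g).
Proof.
move=> [[tD1 tD2 tbal] _] b bg.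
pose e k : C := @finfun _ (fun ij : I * I => Bqq ij.1 ij.2)
  (fun mj => pij mj.1 mj.2 (if k == mj.2 then 1 else 0)).
pose c k : C := @finfun _ (fun ij : I * I => Bqq ij.1 ij.2)
  (fun il => pij il.1 il.2 (b il.1 k)).
have g_sum : g = \sum_k e k.
  apply/ffunP=> -[m j]; rewrite dprod_sumE (bigD1 j) //= !ffunE /= eqxx.
  by rewrite big1 ?addr0 // => k /negbTE kj; rewrite ffunE /= kj rmorph0.
have tD1' n : additive_fun C T (t^~ n) by move=> m m'; apply: tD1.
(* Row i of c k - g is pi_il(b_ik - 1) with b_ik - 1 in J_i + J_k: the J_i-part vanishes
   in every B_il, and the J_k-part crosses the tensor sign, where it kills e k. *)
have ck_g k : t (c k - g) (e k) = 0.
  rewrite [c k - g]sum_lactC_idemA (additive_fun_sum (tD1' _)) big1 // => i _ /=.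
  have /pij_eq0[x [y [x0 y0 bxy]]] : pij i k (b i k - 1) = 0.
    by rewrite rmorphB bg ffunE /= rmorph1 subrr.
  have -> : lC (idemA i) (c k - g) = rC (lC (idemA i) g) (iotaA y).
    apply/ffunP=> -[i' l]; rewrite !ffunE /=.
    case: (eqVneq i i') => [<- | _]; last by rewrite rmorph0 !mul0r.
    rewrite mulr1n !rmorph1 !mul1r pr_comp.
    by rewrite -(rmorph1 (pij i l)) -rmorphB bxy rmorphD pij_l0 ?add0r.
  rewrite tbal // (_ : lC (iotaA y) (e k) = 0) ?(additive_fun0 (tD2 _)) //.
  apply/ffunP=> -[m j]; rewrite !ffunE /=.
  by case: (k =P j) => [<- | _]; rewrite ?pl_comp ?(pij_r0 _ y0) ?mul0r ?rmorph0 ?mulr0.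
rewrite {2}g_sum (additive_fun_sum (tD2 g)); apply: eq_bigr => k _.
by rewrite -[X in _ = t X _](subrK g) tD1 ck_g add0r.
Qed.

Definition coboundary (a : A) : C :=
  @finfun _ (fun ij : I * I => Bqq ij.1 ij.2) (fun ij => pl _ _ (a ij.1) - pr _ _ (a ij.2)).

Lemma coboundary_add : additive_fun A C coboundary.
Proof. by move=> a a'; apply/ffunP=> -[i j]; rewrite !ffunE /= !rmorphD opprD addrACA. Qed.

Lemma coboundary_iotaA b : coboundary (iotaA b) = 0.
Proof. by apply/ffunP=> -[i j]; rewrite !ffunE /= pl_comp pr_comp subrr. Qed.

Lemma coboundary_completion a :
  in_completion I Bq Bqq (fun i j x => pl i j x) (fun i j x => pr i j x) a ->
  coboundary a = 0.
Proof. by move=> a_compl; apply/ffunP=> -[i j]; rewrite !ffunE /= a_compl subrr. Qed.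

Lemma complete_of_exact : exact_at B A C iotaA coboundary -> complete.
Proof.
move=> exact_seq a /coboundary_completion/exact_seq[b ab].
by exists b => i; rewrite -ab ffunE.
Qed.

Lemma kernel_sum_ik i j k u : pij i k u = 0 -> in_kernel_sum (pij i j) (p k) u.
Proof. by move/pij_eq0=> [x [y [x0 y0 ->]]]; exists x, y; rewrite pij_l0. Qed.

Lemma kernel_sum_jk i j k u : pij j k u = 0 -> in_kernel_sum (pij i j) (p k) u.
Proof. by move/pij_eq0=> [x [y [x0 y0 ->]]]; exists x, y; rewrite pij_r0. Qed.

Lemma kernel_sum_ki i j k u : pij k i u = 0 -> in_kernel_sum (p k) (pij i j) u.
Proof. by move/pij_eq0=> [x [y [x0 y0 ->]]]; exists x, y; rewrite pij_l0. Qed.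

Lemma kernel_sum_kj i j k u : pij k j u = 0 -> in_kernel_sum (p k) (pij i j) u.
Proof. by move/pij_eq0=> [x [y [x0 y0 ->]]]; exists x, y; rewrite pij_r0. Qed.

Lemma pij_kernel_sum_ikk i k u : in_kernel_sum (pij i k) (p k) u -> pij i k u = 0.
Proof. by move=> [x [y [x0 y0 ->]]]; rewrite rmorphD x0 pij_r0 ?addr0. Qed.

Lemma pij_kernel_sum_kki k i u : in_kernel_sum (p k) (pij k i) u -> pij k i u = 0.
Proof. by move=> [x [y [x0 y0 ->]]]; rewrite rmorphD y0 pij_l0 ?addr0. Qed.

Local Notation ractC_B := (dprod_ract (fun ij (c : Bqq ij.1 ij.2) r => c * pij ij.1 ij.2 r)).

Lemma rmodule_A : rmodule B A ract.
Proof. by apply: (rmodule_dprod (act := fun i y r => y * p i r)) => i; apply: rmodule_rmorph. Qed.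

Lemma rmodule_C : rmodule B C ractC_B.
Proof. by apply: rmodule_dprod => ij; apply: rmodule_rmorph. Qed.

Lemma iotaA_rlinear : rlinear B B A (fun r s => r * s) ract iotaA.
Proof. by split=> [b b' | b r]; apply/ffunP=> i; rewrite !ffunE ?rmorphD ?rmorphM. Qed.

Lemma coboundary_rlinear : rlinear B A C ract ractC_B coboundary.
Proof.
split=> [|a r]; first exact: coboundary_add.
by apply/ffunP=> -[i j]; rewrite !ffunE /= !rmorphM pl_comp pr_comp mulrBl.
Qed.

Definition TCA := dprod (I * I * I)%type (fun x => kernel_sum_quot (pij x.1.1 x.1.2) (p x.2)).

Definition tensorCA : C -> A -> TCA :=
  dprod_tensor (fun (ij : I * I) (k : I) => kernel_sum_tensor (@pij_surj ij.1 ij.2) (@p_surj k)).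

Lemma tensorCA_is_tensor_product :
  is_tensor_product B (fun _ => True) C A TCA ractC_B lact tensorCA.
Proof.
apply: (is_tensor_product_dprod (actN := fun k r y => p k r * y))
  => [ij r | k r | ij k]; rewrite ?mul0r ?mulr0 //.
exact: is_tensor_product_kernel_sum.
Qed.

Definition coboundaryCA (c : C) : TCA :=
  @finfun _ (fun x => kernel_sum_quot (pij x.1.1 x.1.2) (p x.2))
    (fun x => kernel_sum_factor _ _ (@pij_surj x.1.1 x.2) (c (x.1.1, x.2))
            - kernel_sum_factor _ _ (@pij_surj x.1.2 x.2) (c (x.1.2, x.2))).

Lemma coboundaryCA_add : additive_fun C TCA coboundaryCA.
Proof.
move=> c c'; apply/ffunP=> -[[i j] k]; rewrite !ffunE /=.
rewrite (kernel_sum_factor_add _ (@kernel_sum_ik i j k)).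
by rewrite (kernel_sum_factor_add _ (@kernel_sum_jk i j k)) opprD addrACA.
Qed.

Lemma coboundaryCA_tensor m n : coboundaryCA (tensorAA m n) = tensorCA (coboundary m) n.
Proof.
apply/ffunP=> -[[i j] k]; rewrite !ffunE /=.
rewrite -[m i](preimageK (@p_surj i)) -[m j](preimageK (@p_surj j)).
rewrite -[n k](preimageK (@p_surj k)) !pl_comp !pr_comp -!rmorphM -rmorphB.
rewrite (kernel_sum_factorE _ (@kernel_sum_ik i j k)).
rewrite (kernel_sum_factorE _ (@kernel_sum_jk i j k)).
by rewrite kernel_sum_tensorE mulrBl (additive_funB (kernel_sum_pi_add _ _)).
Qed.

Lemma exact_coboundaryCA : exact_at A C TCA (tensorAA (iotaA 1)) coboundaryCA.
Proof.
move=> y; split=> [Gy0 | [a <-]]; last first.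
  have [[tD1 _ _] _] := tensorCA_is_tensor_product.
  by rewrite coboundaryCA_tensor coboundary_iotaA (additive_fun0 (fun c c' => tD1 c c' a)).
exists (@finfun I (fun k => Bq k) (fun k => p k (preimage (@pij_surj k k) (y (k, k))))).
apply/ffunP=> -[i k]; rewrite !ffunE /= !rmorph1 mul1r pr_comp.
have /eqP := congr1 (fun z : TCA => z (i, k, k)) Gy0; rewrite !ffunE /= subr_eq0.
move=> /eqP/kernel_sum_pi_eq/pij_kernel_sum_ikk; rewrite rmorphB preimageK.
by move=> /eqP; rewrite subr_eq0 => /eqP ->.
Qed.

Lemma complete_of_faithfully_flat_left : faithfully_flat_left B A lact -> complete.
Proof.
case=> lmodule_A ff; apply: complete_of_exact.
have [[_ tD2 _] _] := tensorAA_is_tensor_product.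
apply/(ff _ _ _ _ _ _ _ _ (rmodule_regular B) rmodule_A rmodule_C iotaA_rlinear
  coboundary_rlinear _ _ _ _ _ _ (is_tensor_product_regular_l lmodule_A)
  tensorAA_is_tensor_product tensorCA_is_tensor_product (tensorAA (iotaA 1)) coboundaryCA
  (tD2 _) coboundaryCA_add _ coboundaryCA_tensor).
  exact: tensor_regular_map_l iotaA_rlinear tensorAA_is_tensor_product.1.
exact: exact_coboundaryCA.
Qed.

Local Notation lactC_B := (dprod_lact (fun ij r (c : Bqq ij.1 ij.2) => pij ij.1 ij.2 r * c)).

Lemma lmodule_A : lmodule B A lact.
Proof. by apply: (lmodule_dprod (act := fun i r y => p i r * y)) => i; apply: lmodule_rmorph. Qed.

Lemma lmodule_C : lmodule B C lactC_B.
Proof. by apply: lmodule_dprod => ij; apply: lmodule_rmorph. Qed.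

Lemma iotaA_llinear : llinear B B A (fun r s => r * s) lact iotaA.
Proof. by split=> [b b' | b r]; apply/ffunP=> i; rewrite !ffunE ?rmorphD ?rmorphM. Qed.

Lemma coboundary_llinear : llinear B A C lact lactC_B coboundary.
Proof.
split=> [|a r]; first exact: coboundary_add.
by apply/ffunP=> -[i j]; rewrite !ffunE /= !rmorphM pl_comp pr_comp mulrBr.
Qed.

Definition TAC := dprod (I * (I * I))%type (fun x => kernel_sum_quot (p x.1) (pij x.2.1 x.2.2)).

Definition tensorAC : A -> C -> TAC :=
  dprod_tensor (fun (k : I) (ij : I * I) => kernel_sum_tensor (@p_surj k) (@pij_surj ij.1 ij.2)).

Lemma tensorAC_is_tensor_product :
  is_tensor_product B (fun _ => True) A C TAC ract lactC_B tensorAC.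
Proof.
apply: (is_tensor_product_dprod (actM := fun k y r => y * p k r))
  => [k r | ij r | k ij]; rewrite ?mul0r ?mulr0 //.
exact: is_tensor_product_kernel_sum.
Qed.

Definition coboundaryAC (c : C) : TAC :=
  @finfun _ (fun x => kernel_sum_quot (p x.1) (pij x.2.1 x.2.2))
    (fun x => kernel_sum_factor _ _ (@pij_surj x.1 x.2.1) (c (x.1, x.2.1))
            - kernel_sum_factor _ _ (@pij_surj x.1 x.2.2) (c (x.1, x.2.2))).

Lemma coboundaryAC_add : additive_fun C TAC coboundaryAC.
Proof.
move=> c c'; apply/ffunP=> -[k [i j]]; rewrite !ffunE /=.
rewrite (kernel_sum_factor_add _ (@kernel_sum_ki i j k)).
by rewrite (kernel_sum_factor_add _ (@kernel_sum_kj i j k)) opprD addrACA.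
Qed.

Lemma coboundaryAC_tensor m n : coboundaryAC (tensorAA m n) = tensorAC m (coboundary n).
Proof.
apply/ffunP=> -[k [i j]]; rewrite !ffunE /=.
rewrite -[m k](preimageK (@p_surj k)) -[n i](preimageK (@p_surj i)).
rewrite -[n j](preimageK (@p_surj j)) !pl_comp !pr_comp -!rmorphM -rmorphB.
rewrite (kernel_sum_factorE _ (@kernel_sum_ki i j k)).
rewrite (kernel_sum_factorE _ (@kernel_sum_kj i j k)).
by rewrite kernel_sum_tensorE mulrBr (additive_funB (kernel_sum_pi_add _ _)).
Qed.

Lemma exact_coboundaryAC : exact_at A C TAC (tensorAA^~ (iotaA 1)) coboundaryAC.
Proof.
move=> y; split=> [Gy0 | [a <-]]; last first.
  have [[_ tD2 _] _] := tensorAC_is_tensor_product.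
  by rewrite coboundaryAC_tensor coboundary_iotaA (additive_fun0 (tD2 a)).
exists (@finfun I (fun k => Bq k) (fun k => p k (preimage (@pij_surj k k) (y (k, k))))).
apply/ffunP=> -[k i]; rewrite !ffunE /= !rmorph1 mulr1 pl_comp.
have /eqP := congr1 (fun z : TAC => z (k, (k, i))) Gy0; rewrite !ffunE /= subr_eq0.
move=> /eqP/kernel_sum_pi_eq/pij_kernel_sum_kki; rewrite rmorphB preimageK.
by move=> /eqP; rewrite subr_eq0 => /eqP.
Qed.

Lemma complete_of_faithfully_flat_right : faithfully_flat_right B A ract -> complete.
Proof.
case=> rmodule_A ff; apply: complete_of_exact.
have [[tD1 _ _] _] := tensorAA_is_tensor_product.
apply/(ff _ _ _ _ _ _ _ _ (lmodule_regular B) lmodule_A lmodule_C iotaA_llinear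
  coboundary_llinear _ _ _ _ _ _ (is_tensor_product_regular_r rmodule_A)
  tensorAA_is_tensor_product tensorAC_is_tensor_product (tensorAA^~ (iotaA 1)) coboundaryAC
  (fun y y' => tD1 y y' _) coboundaryAC_add _ coboundaryAC_tensor).
  exact: tensor_regular_map_r iotaA_llinear tensorAA_is_tensor_product.1.
exact: exact_coboundaryAC.
Qed.
End Covering.

Theorem theorem3p4
  (k : fieldType) (B : pzRingType) (alg : {rmorphism k -> B})
  (alg_central : central_structure_map k B alg)
  (I : finType) (J : I -> B -> Prop)
  (J_ideal : forall i, two_sided_ideal B (J i))
  (J_cover : forall b : B, (forall i, J i b) -> b = 0)
  (Bq : I -> pzRingType) (p : forall i, {rmorphism B -> Bq i})
  (p_surj : forall i (y : Bq i), exists b : B, p i b = y)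
  (p_ker : forall i (b : B), p i b = 0 <-> J i b)
  (Bqq : I -> I -> pzRingType) (pij : forall i j, {rmorphism B -> Bqq i j})
  (pij_surj : forall i j (y : Bqq i j), exists b : B, pij i j b = y)
  (pij_ker : forall i j (b : B),
      pij i j b = 0 <-> exists x y, [/\ J i x, J j y & b = x + y])
  (pl : forall i j, {rmorphism Bq i -> Bqq i j})
  (pl_comp : forall i j (b : B), pl i j (p i b) = pij i j b)
  (pr : forall i j, {rmorphism Bq j -> Bqq i j})
  (pr_comp : forall i j (b : B), pr i j (p j b) = pij i j b) :
  (complete_covering B I Bq Bqq (fun i b => p i b)
       (fun i j x => pl i j x) (fun i j x => pr i j x) ->
   galois_coring B I Bq Bqq (fun i b => p i b) (fun i j b => pij i j b)
       (fun i j x => pl i j x) (fun i j x => pr i j x)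
       (gC B I Bqq (fun i j b => pij i j b)))
  /\
  ((faithfully_flat_left B (Aty I Bq) (lactBA B I Bq (fun i b => p i b))
    \/ faithfully_flat_right B (Aty I Bq) (ractAB B I Bq (fun i b => p i b))) ->
   complete_covering B I Bq Bqq (fun i b => p i b)
       (fun i j x => pl i j x) (fun i j x => pr i j x)).
Proof.
have galois := galois_is_tensor_product p_surj p_ker pij_surj pij_ker pl_comp pr_comp.
split=> [_ | [ff | ff]].
- split=> //; split; first exact: (counit_g p_ker pij_ker).
  exact: (coproduct_g p_ker pij_ker pl_comp pr_comp).
- exact: (complete_of_faithfully_flat_left p_surj p_ker pij_surj pij_ker pl_comp pr_comp ff).
- exact: (complete_of_faithfully_flat_right p_surj p_ker pij_surj pij_ker pl_comp pr_comp ff).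
Qed.
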